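(* Define $\mathrm{Mex}(F)=\min(\mathbb{N}_0\setminus F)$ for $F\subseteq\mathbb{N}_0$, and $a+D=\{a+d:d\in D\}$. Define triples $v(n)=(v_1(n),v_2(n),v_3(n))$, $n\ge 0$, recursively by $v(0)=(0,0,0)$ and, for $n\ge 0$, with $F_n=\{v_i(k): 0\le k\le n,\ i\in\{1,2,3\}\}$ and $D_n=\bigcup_{k=0}^{n}\{v_2(k)-v_1(k),\,v_3(k)-v_2(k),\,v_3(k)-v_1(k)\}$, \[ v_1(n+1)=\mathrm{Mex}(F_n),\quad v_2(n+1)=\mathrm{Mex}\big((v_1(n+1)+D_n)\cup\{1,\dots,v_1(n+1)\}\cup F_n\big), \] \[ v_3(n+1)=\mathrm{Mex}\big((v_2(n+1)+D_n)\cup\{1,\dots,v_2(n+1)\}\cup F_n\big). \] For a finite set $K\subseteq\mathbb{N}_0$ let $\mathrm{Bl}(K)$ be the maximum length (number of elements) of a run of consecutive integers $m,m+1,\dots,m+j-1$ contained in $K$ (with $\mathrm{Bl}(\emptyset)=0$). Then for all $n\ge 0$: \[ \mathrm{Bl}\big(F_n\cap[\mathrm{Mex}(F_n),\,\mathrm{Mex}(F_n)+\mathrm{Mex}(D_n)-1]\big)\le 3, \] \[ v_1(n+1)-v_1(n)\in\{1,2,3,4\},\quad v_2(n+1)-v_2(n)\in\{2,3,\dots,8\},\quad v_3(n+1)-v_3(n)\in\{3,4,\dots,12\}, \] and for all $n\ge 1$, $\mathrm{Mex}(D_n)-\mathrm{Mex}(D_{n-1})\in\{1,2,3,4\}$.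
   Context: $\mathbb{N}_0$ denotes the nonnegative integers; $[a,b]$ denotes the integer interval $\{m\in\mathbb{Z}: a\le m\le b\}$. *)

From mathcomp Require Import all_boot zify.
Set Implicit Arguments. Unset Strict Implicit. Unset Printing Implicit Defensive.

(* Finite subsets of N_0 are represented by sequences (membership = \in). *)

Lemma mex_ex (s : seq nat) : exists m, m \notin s.
Proof.
have le : forall y, y \in s -> y <= sumn s.
  elim: s => [//|x s IH] y /=; rewrite inE => /orP [/eqP ->|H].
    lia.
  by have := IH y H; lia.
exists (sumn s).+1; apply/negP => /le; lia.
Qed.

Definition mex (s : seq nat) : nat := ex_minn (mex_ex s).

Definition triple := (nat * nat * nat)%type.
Definition t1 (t : triple) : nat := t.1.1.
Definition t2 (t : triple) : nat := t.1.2.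
Definition t3 (t : triple) : nat := t.2.

Definition Fof (h : seq triple) : seq nat :=
  flatten [seq [:: t1 t; t2 t; t3 t] | t <- h].
Definition Dof (h : seq triple) : seq nat :=
  flatten [seq [:: t2 t - t1 t; t3 t - t2 t; t3 t - t1 t] | t <- h].

Definition shift (a : nat) (D : seq nat) : seq nat := [seq a + d | d <- D].

Definition next (h : seq triple) : triple :=
  let a := mex (Fof h) in
  let b := mex (shift a (Dof h) ++ iota 1 a ++ Fof h) in
  let c := mex (shift b (Dof h) ++ iota 1 b ++ Fof h) in
  (a, b, c).

Fixpoint vhist (n : nat) : seq triple :=
  match n with
  | 0 => [:: (0, 0, 0)]
  | n'.+1 => rcons (vhist n') (next (vhist n'))
  end.

Definition v (n : nat) : triple := nth (0, 0, 0) (vhist n) n.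
Definition v1 n := t1 (v n).
Definition v2 n := t2 (v n).
Definition v3 n := t3 (v n).

Definition F (n : nat) : seq nat := Fof (vhist n).
Definition D (n : nat) : seq nat := Dof (vhist n).

(* Bl(K): maximal length of a run m, m+1, ..., m+j-1 contained in K
   (0 for K empty). A run of length j >= 1 starts at some m in K, and
   its j distinct elements lie in K, so j <= size K. *)
Definition run (K : seq nat) (m j : nat) : bool :=
  all (fun i => m + i \in K) (iota 0 j).
Definition Bl (K : seq nat) : nat :=
  \max_(m <- K) \max_(j < (size K).+1 | run K m j) j.

(* Write a_n, b_n, c_n for v(n) and d_n = Mex(D_n).  For all n one proves
     b_n - a_n < d_n <= b_n - a_n + 2,
     a_(n+1) + d_n <= b_(n+1) <= a_(n+1) + d_n + 2,   c_(n+1) = b_(n+1) + d_n.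
   This makes d increasing and makes b, c and c - a grow by at least 2, 3 and 2
   per step.  Hence above a_n the set F_n consists of b- and c-values and has
   no four consecutive elements, while above d_n the set D_n consists of values
   c_k - a_k and has no two consecutive elements.  These two sparsity facts are
   what keep b_(n+1) within a_(n+1) + d_n + 2 and d_(n+1) within
   b_(n+1) - a_(n+1) + 2 in the induction step; the stated increments then
   follow by arithmetic. *)

From Pilot Require Import Defs.
From mathcomp Require Import all_boot zify.

Set Implicit Arguments.
Unset Strict Implicit.
Unset Printing Implicit Defensive.

Lemma mex_notin s : mex s \notin s.
Proof. by rewrite /mex; case: ex_minnP. Qed.

Lemma mex_le s y : y \notin s -> mex s <= y.
Proof. by rewrite /mex; case: ex_minnP => m _ /[apply]. Qed.

Lemma mem_lt_mex s y : y < mex s -> y \in s.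
Proof. by apply: contraTT; rewrite -leqNgt; apply: mex_le. Qed.

Lemma lt_mex s y : (forall z, z <= y -> z \in s) -> y < mex s.
Proof. by move=> sub; rewrite ltnNge; apply: contraNN (mex_notin s) => /sub. Qed.

Lemma mexE s m : m \notin s -> all (fun y => y \in s) (iota 0 m) -> mex s = m.
Proof.
move=> m_notin /allP sub; apply/eqP; rewrite eqn_leq mex_le //= leqNgt.
by apply: contraNN (mex_notin s) => lt_m; apply: sub; rewrite mem_iota.
Qed.

Lemma mex_subset s t : {subset s <= t} -> mex s <= mex t.
Proof.
by move=> st; rewrite leqNgt; apply: contraNN (mex_notin t) => /mem_lt_mex/st.
Qed.

Notation avoid p Dl Fl := (shift p Dl ++ iota 1 p ++ Fl).

Section Avoid.
Variables (p : nat) (Dl Fl : seq nat).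
Hypothesis Fl0 : 0 \in Fl.

Lemma notin_avoidP y :
  reflect [/\ p < y, y \notin Fl & y - p \notin Dl] (y \notin avoid p Dl Fl).
Proof.
rewrite !mem_cat !negb_or mem_iota; apply: (iffP and3P) => [[Dy py Fy]|[py Fy Dy]].
  have lt_py : p < y.
    by case: y Dy Fy py => [|y] _; [rewrite Fl0 | lia].
  split=> //; apply: contra Dy => Dyp; apply/mapP; exists (y - p) => //; lia.
split=> //; last lia.
by apply: contra Dy => /mapP [z Dz ->]; rewrite addKn.
Qed.

Lemma mex_avoid_le y :
  p < y -> y \notin Fl -> y - p \notin Dl -> mex (avoid p Dl Fl) <= y.
Proof. by move=> *; apply/mex_le/notin_avoidP. Qed.

Lemma mex_avoid_spec (m := mex (avoid p Dl Fl)) :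
  [/\ p + mex Dl <= m, m \notin Fl & m - p \notin Dl].
Proof.
have /notin_avoidP [lt_pm Fm Dm] := mex_notin (avoid p Dl Fl).
by split=> //; have := mex_le Dm; lia.
Qed.

End Avoid.

Definition spaced (g N : nat) (f : nat -> nat) := forall k, k < N -> f k + g <= f k.+1.

Section Spaced.
Variables (g N : nat) (f : nat -> nat).
Hypothesis f_spaced : spaced g N f.

Lemma spaced_lt i j : i < j <= N -> f i + g <= f j.
Proof.
move=> /andP []; elim: j => // j IHj; rewrite ltnS leq_eqVlt => /predU1P [-> | lt_ij] lt_jN.
  exact: f_spaced.
by have := f_spaced lt_jN; have := IHj lt_ij (ltnW lt_jN); lia.
Qed.

Lemma spaced_le i j : i <= j <= N -> f i <= f j.
Proof.
case/andP; rewrite leq_eqVlt => /predU1P [-> // | lt_ij] le_jN.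
by have := @spaced_lt i j; rewrite lt_ij le_jN; lia.
Qed.

Lemma spaced_neq i j e : i <= N -> j <= N -> 0 < e < g -> f j <> f i + e.
Proof.
move=> le_iN le_jN e_bnd; case: (ltngtP i j) => [lt_ij | lt_ji | ->]; try lia.
  by have := spaced_lt (i := i) (j := j); rewrite lt_ij le_jN; lia.
by have := spaced_lt (i := j) (j := i); rewrite lt_ji le_iN; lia.
Qed.

End Spaced.

Lemma no_run4 (B C : nat -> Prop) x :
  (forall y, B y -> ~ B y.+1) -> (forall y, C y -> ~ C y.+1 /\ ~ C y.+2) ->
  ~ (forall i, i < 4 -> B (x + i) \/ C (x + i)).
Proof.
move=> noB noC cover.
have [+ [+ [+ +]]] := (cover 0 isT, (cover 1 isT, (cover 2 isT, cover 3 isT))).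
rewrite addn0 addn1 addn2 addn3.
case=> [B0|C0] [B1|C1] [B2|C2] [B3|C3];
  by [ apply: noB B0 B1 | apply: noB B1 B2 | apply: noB B2 B3
     | case: (noC _ C0) | case: (noC _ C1) | case: (noC _ C2) ].
Qed.

Lemma run_sub (K K' : seq nat) m j k :
  {subset K <= K'} -> k <= j -> run K m j -> run K' m k.
Proof.
move=> sub le_kj /allP runK; apply/allP => i; rewrite mem_iota => /andP [_ lt_ik].
by apply/sub/runK; rewrite mem_iota (leq_trans lt_ik).
Qed.

Lemma Bl_le (K : seq nat) b : (forall m j, run K m j -> j <= b) -> Bl K <= b.
Proof.
move=> runs_le; apply/bigmax_leqP_seq => m _ _.
by apply/bigmax_leqP => j; apply: runs_le.
Qed.

Lemma size_vhist n : size (vhist n) = n.+1.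
Proof. by elim: n => //= n IHn; rewrite size_rcons IHn. Qed.

Lemma vS n : v n.+1 = Defs.next (vhist n).
Proof. by rewrite /v /= nth_rcons size_vhist ltnn eqxx. Qed.

Lemma vhistS n : vhist n.+1 = rcons (vhist n) (v n.+1).
Proof. by rewrite vS. Qed.

Lemma vhistE n : vhist n = [seq v k | k <- iota 0 n.+1].
Proof.
elim: n => [//|n IHn].
by rewrite vhistS IHn -map_rcons -cats1 -[n.+2]addn1 iotaD.
Qed.

Lemma mem_F n x :
  reflect (exists2 k, k <= n & x \in [:: v1 k; v2 k; v3 k]) (x \in F n).
Proof.
rewrite /F /Fof vhistE -map_comp.
by apply: (iffP flatten_mapP) => -[k]; rewrite ?mem_iota => ? ?; exists k; rewrite ?mem_iota.
Qed.

Lemma mem_D n x :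
  reflect (exists2 k, k <= n & x \in [:: v2 k - v1 k; v3 k - v2 k; v3 k - v1 k])
          (x \in D n).
Proof.
rewrite /D /Dof vhistE -map_comp.
by apply: (iffP flatten_mapP) => -[k]; rewrite ?mem_iota => ? ?; exists k; rewrite ?mem_iota.
Qed.

Lemma FS n : F n.+1 = F n ++ [:: v1 n.+1; v2 n.+1; v3 n.+1].
Proof. by rewrite /F /Fof vhistS map_rcons flatten_rcons. Qed.

Lemma DS n :
  D n.+1 = D n ++ [:: v2 n.+1 - v1 n.+1; v3 n.+1 - v2 n.+1; v3 n.+1 - v1 n.+1].
Proof. by rewrite /D /Dof vhistS map_rcons flatten_rcons. Qed.

Lemma v1S n : v1 n.+1 = mex (F n).
Proof. by rewrite /v1 vS. Qed.

Lemma v2S n : v2 n.+1 = mex (avoid (v1 n.+1) (D n) (F n)).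
Proof. by rewrite /v2 v1S vS. Qed.

Lemma v3S n : v3 n.+1 = mex (avoid (v2 n.+1) (D n) (F n)).
Proof. by rewrite /v3 v2S v1S vS. Qed.

Lemma v1_F n : v1 n \in F n.
Proof. by apply/mem_F; exists n; rewrite ?inE ?eqxx. Qed.

Lemma zero_F n : 0 \in F n.
Proof. by apply/mem_F; exists 0. Qed.

Lemma zero_D n : 0 \in D n.
Proof. by apply/mem_D; exists 0. Qed.

Lemma mexD_gt0 n : 0 < mex (D n).
Proof. by apply: lt_mex => z; rewrite leqn0 => /eqP ->; apply: zero_D. Qed.

Lemma v1_ltS n : v1 n < v1 n.+1.
Proof.
rewrite ltn_neqAle; apply/andP; split.
  by rewrite v1S; apply: contraNneq (mex_notin (F n)) => <-; apply: v1_F.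
case: n => [//|n]; rewrite !v1S.
by apply: mex_subset => x; rewrite FS mem_cat => ->.
Qed.

Lemma v1_mono : {homo v1 : i j / i <= j}.
Proof. by apply: homo_leq => [//|i j k|i]; [apply: leq_trans | apply/ltnW/v1_ltS]. Qed.

Lemma v_at1 : [/\ v1 1 = 1, v2 1 = 2 & v3 1 = 3].
Proof.
have e1 : v1 1 = 1 by rewrite v1S; apply: mexE.
have e2 : v2 1 = 2 by rewrite v2S e1; apply: mexE.
by split=> //; rewrite v3S e2; apply: mexE.
Qed.

Lemma mexD0 : mex (D 0) = 1.
Proof. exact: mexE. Qed.

Lemma mexD1 : mex (D 1) = 3.
Proof. by case: v_at1 => e1 e2 e3; rewrite DS e1 e2 e3; apply: mexE. Qed.

Definition mexD_bounds k := v2 k - v1 k < mex (D k) <= v2 k - v1 k + 2.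

Definition vS_shape k :=
  v3 k.+1 = v2 k.+1 + mex (D k) /\
  v1 k.+1 + mex (D k) <= v2 k.+1 <= v1 k.+1 + mex (D k) + 2.

Section Consequences.
Variable n : nat.
Hypothesis bounds : forall k, k <= n -> mexD_bounds k.
Hypothesis shape : forall k, k < n -> vS_shape k.

Lemma v1_le_v2 k : k <= n -> v1 k <= v2 k.
Proof. by case: k => [//|k] /shape [_]; lia. Qed.

Lemma v2_le_v3 k : k <= n -> v2 k <= v3 k.
Proof. by case: k => [//|k] /shape [-> _]; apply: leq_addr. Qed.

Lemma v3_lt k : k <= n -> v3 k < v2 k + mex (D k).
Proof.
case: k => [_|k lt_kn]; first exact: mexD_gt0.
have [-> le_v2] := shape lt_kn; have := bounds lt_kn; rewrite /mexD_bounds; lia.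
Qed.

Lemma mexD_spaced : spaced 1 n (fun k => mex (D k)).
Proof.
by move=> k lt_kn; have [_] := shape lt_kn; have := bounds lt_kn; rewrite /mexD_bounds; lia.
Qed.

Lemma v2_spaced : spaced 2 n v2.
Proof.
move=> k lt_kn; have [_] := shape lt_kn; have := bounds (ltnW lt_kn).
have := v1_ltS k; have := v1_le_v2 (ltnW lt_kn); rewrite /mexD_bounds; lia.
Qed.

Lemma v3_spaced : spaced 3 n v3.
Proof.
move=> k lt_kn; have [-> _] := shape lt_kn.
by have := v2_spaced lt_kn; have := v3_lt (ltnW lt_kn); lia.
Qed.

Lemma F_le_v3 x : x \in F n -> x <= v3 n.
Proof.
case/mem_F => k le_kn; rewrite !inE.
have le_v3 : v3 k <= v3 n by apply: (spaced_le v3_spaced); rewrite le_kn leqnn.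
by have := v1_le_v2 le_kn; have := v2_le_v3 le_kn; move=> ? ? /or3P [] /eqP ->; lia.
Qed.

Lemma F_gt_v1 x : x \in F n -> v1 n < x -> exists2 k, k <= n & x = v2 k \/ x = v3 k.
Proof.
case/mem_F => k le_kn; rewrite !inE => /or3P [] /eqP -> lt_v1.
- by have := v1_mono le_kn; lia.
- by exists k => //; left.
- by exists k => //; right.
Qed.

Lemma no_run4_F x : v1 n < x -> ~~ run (F n) x 4.
Proof.
move=> lt_v1x; apply/negP => /allP runF.
pose on_v2 y := exists2 k, k <= n & y = v2 k.
pose on_v3 y := exists2 k, k <= n & y = v3 k.
apply: (@no_run4 on_v2 on_v3 x).
- move=> _ [i le_in ->] [j le_jn] /esym; rewrite -addn1.
  exact: (spaced_neq v2_spaced).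
- move=> _ [i le_in ->]; split=> -[j le_jn] /esym; [rewrite -addn1 | rewrite -addn2];
  exact: (spaced_neq v3_spaced).
move=> i lt_i4; have Fxi : x + i \in F n by apply: runF; rewrite mem_iota.
have [k le_kn [] ->] := F_gt_v1 Fxi (leq_trans lt_v1x (leq_addr _ _)).
  by left; exists k.
by right; exists k.
Qed.

Lemma D_ge_mexD x :
  x \in D n -> mex (D n) <= x -> exists2 k, 0 < k <= n & x = v3 k - v1 k.
Proof.
case/mem_D => k le_kn; rewrite !inE.
have le_d : mex (D k) <= mex (D n) by apply: (spaced_le mexD_spaced); rewrite le_kn leqnn.
have := bounds le_kn; have := v3_lt le_kn; have := v1_le_v2 le_kn; rewrite /mexD_bounds.
case: k le_kn le_d => [|k] le_kn le_d.
  by rewrite /v1 /v2 /v3 /=; have := mexD_gt0 n; lia.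
by move=> ? ? ? /or3P [] /eqP -> ?; try lia; exists k.+1.
Qed.

Lemma span_spaced : spaced 2 n.-1 (fun k => v3 k.+1 - v1 k.+1).
Proof.
move=> k lt_kn; have lt_Skn : k.+1 < n by lia.
have [-> b1] := shape (ltnW lt_Skn); have [-> b2] := shape lt_Skn.
have := bounds (ltnW lt_Skn); have := mexD_spaced (ltnW lt_Skn).
rewrite /mexD_bounds; lia.
Qed.

Lemma D_ge_mexD_succ x : x \in D n -> mex (D n) <= x -> x.+1 \notin D n.
Proof.
move=> Dx le_dx; apply/negP => DSx.
have [i /andP [i_gt0 le_in] Ex] := D_ge_mexD Dx le_dx.
have [j /andP [j_gt0 le_jn]] := D_ge_mexD DSx (leqW le_dx).
rewrite Ex -addn1 -(prednK i_gt0) -(prednK j_gt0) => /esym.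
by apply: (spaced_neq span_spaced); lia.
Qed.

End Consequences.

Section Step.
Variable n : nat.
Hypothesis bounds : forall k, k <= n -> mexD_bounds k.
Hypothesis shape : forall k, k < n -> vS_shape k.
Hypothesis n_gt0 : 0 < n.

Local Notation a := (v1 n.+1).
Local Notation b := (v2 n.+1).
Local Notation c := (v3 n.+1).
Local Notation d := (mex (D n)).

Lemma mexD_ge3 : 3 <= d.
Proof.
by rewrite -mexD1; apply: (spaced_le (mexD_spaced bounds shape)); rewrite n_gt0 leqnn.
Qed.

Lemma v2_lt_v1S_add k : k <= n -> v2 k < a + d.
Proof.
move=> le_kn; have : v2 k <= v2 n.
  by apply: (spaced_le (v2_spaced bounds shape)); rewrite le_kn leqnn.
by have := bounds (leqnn n); have := v1_le_v2 shape (leqnn n); have := v1_ltS n;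
  rewrite /mexD_bounds; lia.
Qed.

Lemma F_ge_v1S_add x : x \in F n -> a + d <= x -> exists2 k, k <= n & x = v3 k.
Proof.
move=> Fx le_x; have [|k le_kn [Ex | ->]] := F_gt_v1 Fx; last by exists k.
  by have := v1_ltS n; lia.
by have := v2_lt_v1S_add le_kn; lia.
Qed.

Lemma F_v1S_add_gap e : a + d \in F n -> 0 < e < 3 -> a + d + e \notin F n.
Proof.
move=> F_ad e_bnd; apply/negP => F_ade.
have [i le_in Ei] := F_ge_v1S_add F_ad (leqnn _).
have [j le_jn Ej] := F_ge_v1S_add F_ade (leq_addr _ _).
by apply: (spaced_neq (v3_spaced bounds shape) le_in le_jn e_bnd); rewrite -Ei -Ej.
Qed.

Lemma v2S_avoid : [/\ a + d <= b, b \notin F n & b - a \notin D n].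
Proof. by rewrite v2S; apply: mex_avoid_spec; apply: zero_F. Qed.

Lemma v2S_le y : a < y -> y \notin F n -> y - a \notin D n -> b <= y.
Proof. by rewrite v2S; apply: mex_avoid_le; apply: zero_F. Qed.

Lemma v2S_cases : b = a + d \/ b = a + d + 1 \/ b = a + d + 2 /\ d.+1 \in D n.
Proof.
have [le_b bF bD] := v2S_avoid; have dD : d \notin D n := mex_notin (D n).
have d_gt0 := mexD_gt0 n.
(* F n meets [a + d, a + d + 2] at most in a + d (c-values are 3 apart), and
   D n has no two consecutive elements above d. *)
have [F_ad | F_ad] := boolP (a + d \in F n); last first.
  by left; apply/eqP; rewrite eqn_leq le_b andbT v2S_le ?addKn //; lia.
have b_neq : b <> a + d by move=> Eb; rewrite Eb F_ad in bF.
have [DS1 | DS1] := boolP (d.+1 \in D n); last first.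
  have : b <= a + d + 1.
    by apply: v2S_le; [lia | exact: F_v1S_add_gap | rewrite -addnA addKn addn1].
  by right; left; lia.
right; right; split=> //.
have DS2 : d.+2 \notin D n := D_ge_mexD_succ bounds shape DS1 (leqnSn d).
have : b <= a + d + 2.
  by apply: v2S_le; [lia | exact: F_v1S_add_gap | rewrite -addnA addKn addn2].
have : b <> a + d + 1 by move=> Eb; rewrite Eb -addnA addKn addn1 DS1 in bD.
lia.
Qed.

Lemma v3S_eq : c = b + d.
Proof.
have [le_c _ _] : [/\ b + d <= c, c \notin F n & c - b \notin D n].
  by rewrite v3S; apply: mex_avoid_spec; apply: zero_F.
apply/eqP; rewrite eqn_leq le_c andbT v3S; apply: mex_avoid_le; first exact: zero_F.
- by have := mexD_gt0 n; lia.
- apply/negP => /(F_le_v3 bounds shape).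
  have := v3_lt bounds shape (leqnn n); have := v2_lt_v1S_add (leqnn n).
  by have [] := v2S_avoid; lia.
- by rewrite addKn mex_notin.
Qed.

Lemma mexD_bounds_step : mexD_bounds n.+1.
Proof.
have [le_b _ bD] := v2S_avoid; have d3 := mexD_ge3; have Ec := v3S_eq.
apply/andP; split.
  apply: lt_mex => z le_z; rewrite DS mem_cat !inE.
  have [lt_zd | le_dz] := ltnP z d; first by rewrite mem_lt_mex.
  have [-> | ne_zd] := eqVneq z d; first by rewrite Ec addKn eqxx !orbT.
  have [-> | ne_zba] := eqVneq z (b - a); first by rewrite orbT.
  have [Eb | [Eb | [Eb DS1]]] := v2S_cases; try lia.
  have -> : z = d.+1 by lia.
  by rewrite DS1.
(* d >= 3 keeps the new difference c - a = (b - a) + d above b - a + 2. *)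
suff [y [lt_y le_y Dy]] : exists y, [/\ b - a < y, y <= b - a + 2 & y \notin D n].
  have : mex (D n.+1) <= y; last lia.
  apply: mex_le; rewrite DS mem_cat negb_or Dy !inE !negb_or /=.
  by apply/and3P; split; apply/eqP; lia.
have [DS1 | DS1] := boolP ((b - a).+1 \in D n).
  exists (b - a).+2; split=> //; first lia.
  by apply: (D_ge_mexD_succ bounds shape DS1); lia.
by exists (b - a).+1; split=> //; lia.
Qed.

Lemma vS_shape_step : vS_shape n.
Proof. by split; [apply: v3S_eq | have := v2S_cases; lia]. Qed.

End Step.

Lemma invariant_upto n :
  (forall k, k <= n.+1 -> mexD_bounds k) /\ (forall k, k <= n -> vS_shape k).
Proof.
elim: n => [|n [bounds shape]].
  have [e1 e2 e3] := v_at1; split=> -[|[|k]] // _.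
  - by rewrite /mexD_bounds mexD0.
  - by rewrite /mexD_bounds mexD1 e1 e2.
  - by rewrite /vS_shape mexD0 e1 e2 e3.
have shape_lt k : k < n.+1 -> vS_shape k by apply: shape.
split=> k; rewrite leq_eqVlt => /predU1P [-> | lt_k].
- exact: mexD_bounds_step bounds shape_lt (ltn0Sn n).
- exact: bounds.
- exact: vS_shape_step bounds shape_lt (ltn0Sn n).
- exact: shape_lt.
Qed.

Lemma all_mexD_bounds n : mexD_bounds n.
Proof. by case: (invariant_upto n) => /(_ n (leqnSn n)). Qed.

Lemma all_vS_shape n : vS_shape n.
Proof. by case: (invariant_upto n) => _ /(_ n (leqnn n)). Qed.

Lemma mexD_bounds_upto n k : k <= n -> mexD_bounds k.
Proof. by move=> _; apply: all_mexD_bounds. Qed.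

Lemma vS_shape_upto n k : k < n -> vS_shape k.
Proof. by move=> _; apply: all_vS_shape. Qed.

Local Notation bounds := (@mexD_bounds_upto _).
Local Notation shape := (@vS_shape_upto _).

Section AllN.
Variable n : nat.

Lemma v1_step : 1 <= v1 n.+1 - v1 n <= 4.
Proof.
have lt_v1 := v1_ltS n.
have := no_run4_F bounds shape (leqnn (v1 n).+1); rewrite -has_predC => /hasP [i].
rewrite mem_iota /= => lt_i4 /mex_le; rewrite -v1S; lia.
Qed.

Lemma v2_step : 2 <= v2 n.+1 - v2 n <= 8.
Proof.
have := v2_spaced bounds shape (ltnSn n).
have [_ b1] := all_vS_shape n; have := all_mexD_bounds n; have := v1_step.
have := v1_le_v2 shape (leqnn n); rewrite /mexD_bounds; lia.
Qed.

Lemma mexD_step : 0 < n -> 1 <= mex (D n) - mex (D n.-1) <= 4.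
Proof.
case: n => [//|m] _; rewrite succnK; have [_ b1] := all_vS_shape m.
by have := all_mexD_bounds m.+1; rewrite /mexD_bounds; lia.
Qed.

Lemma v3_step : 3 <= v3 n.+1 - v3 n <= 12.
Proof.
have [-> _] := all_vS_shape n; have := v2_step; have := mexD_step.
case: n => [|m]; first by case: v_at1 => _ -> _; rewrite mexD0.
by have [-> _] := all_vS_shape m; rewrite succnK => /(_ isT); lia.
Qed.

Lemma Bl_window :
  Bl [seq x <- F n | (mex (F n) <= x) && (x < mex (F n) + mex (D n))] <= 3.
Proof.
set K := [seq x <- F n | _].
apply: Bl_le => m j run_mj; rewrite leqNgt; apply/negP => lt3j.
have sub : {subset K <= F n} by move=> x; rewrite mem_filter => /andP [].
have : m + 0 \in K by apply: (allP run_mj); rewrite mem_iota; lia.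
rewrite addn0 mem_filter -v1S => /andP [/andP [le_m _] _].
have := no_run4_F bounds shape (leq_trans (v1_ltS n) le_m).
by rewrite (run_sub sub lt3j run_mj).
Qed.

End AllN.

Theorem theorem6 :
  (forall n : nat,
     Bl [seq x <- F n | (mex (F n) <= x) && (x < mex (F n) + mex (D n))] <= 3)
  /\ (forall n : nat, 1 <= v1 n.+1 - v1 n <= 4)
  /\ (forall n : nat, 2 <= v2 n.+1 - v2 n <= 8)
  /\ (forall n : nat, 3 <= v3 n.+1 - v3 n <= 12)
  /\ (forall n : nat, 1 <= n -> 1 <= mex (D n) - mex (D n.-1) <= 4).
Proof.
split; first exact: Bl_window.
split; first exact: v1_step.
split; first exact: v2_step.
split; first exact: v3_step.
exact: mexD_step.
Qed.
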